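(* Let $Z_1,\ldots,Z_{n+1}$ be i.i.d. from an arbitrary distribution $\mathcal P$, $V$ a fixed score function, $\alpha\in(0,1)$. Fix a finite grid $\mathcal G\subset[0,1]$ containing $0$ and $1$. For $a\in\mathcal G$ let $S(a)=\frac{1}{n+1}\sum_{i=1}^{n+1}\mathbb 1\{V_i\le Q(a;\hat{\mathcal F}_i)\}$. Let $\tilde\alpha_1=\min\{a\in\mathcal G:S(a)\ge\alpha\}$, $\tilde\alpha_2=\max\{a\in\mathcal G:S(a)<\alpha\}$, $\alpha_1=S(\tilde\alpha_1)$, $\alpha_2=S(\tilde\alpha_2)$, and let $\tilde\alpha=\tilde\alpha_1$ with probability $\frac{\alpha-\alpha_2}{\alpha_1-\alpha_2}$ and $\tilde\alpha=\tilde\alpha_2$ with probability $\frac{\alpha_1-\alpha}{\alpha_1-\alpha_2}$, using a randomization independent of the data. Then $\mathbb P\{V_{n+1}\le Q(\tilde\alpha;\hat{\mathcal F})\}=\alpha$.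
   Context: Data: $Z_i=(X_i,Y_i)\in\mathbb R^p\times\mathbb R$, $i=1,\ldots,n+1$; $X=\{X_1,\ldots,X_{n+1}\}$ (unordered). A localizer is a function $H(x_1,x_2,X)\in[0,1]$ of $x_1,x_2\in\mathbb R^p$ and of the unordered set $X$, satisfying $H(x,x,X)=1$ for all $x$. Write $H_{i,j}=H(X_i,X_j,X)$ and $p^H_{i,j}=H_{i,j}/\sum_{k=1}^{n+1}H_{i,k}$. For a probability distribution $\mathcal F$ on $\mathbb R\cup\{\infty\}$ and $a\in[0,1]$, $Q(a;\mathcal F)=\inf\{t:\mathbb P_{T\sim\mathcal F}(T\le t)\ge a\}$ (with $Q(0;\mathcal F)=-\infty$); $\delta_v$ denotes the point mass at $v$. A fixed score function is a deterministic measurable $V:\mathbb R^p\times\mathbb R\to[0,\infty)$ not depending on the data; $V_i=V(Z_i)$. Define $\hat{\mathcal F}_i=\sum_{j=1}^{n+1}p^H_{i,j}\delta_{V_j}$ for $i=1,\ldots,n+1$, and $\hat{\mathcal F}=\sum_{j=1}^{n}p^H_{n+1,j}\delta_{V_j}+p^H_{n+1,n+1}\delta_{\infty}$.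
   Formalization: Each localizer entry $H_{i,j}=H(X_i,X_j,X)$ is also a measurable function of the data $(Z_1,\ldots,Z_{n+1})$, for all i and j. The statement above fails without it. *)

From HB Require Import structures.
From mathcomp Require Import all_boot all_order all_algebra.
From mathcomp Require Import all_classical all_reals all_analysis.
Set Implicit Arguments. Unset Strict Implicit. Unset Printing Implicit Defensive.
Import Order.TTheory GRing.Theory Num.Theory.
Local Open Scope classical_set_scope.
Local Open Scope ring_scope.

Section LocalizedConformal.
Variables (R : realType) (p n : nat).

Definition dataT := (p.-tuple R * R)%type.

(* Q(a; F) for the discrete distribution F = \sum_j w j \delta_{v j}
   on R \cup {oo}, with Q(0; F) = -oo. *)
Definition quantile m (w : 'I_m -> R) (v : 'I_m -> \bar R) (a : R) : \bar R :=
  if a == 0 then -oo%E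
  else ereal_inf [set t : \bar R |
         (a%:E <= (\sum_(j < m | (v j <= t)%E) w j)%:E)%E].

Variables (V : dataT -> R)
          (H : p.-tuple R -> p.-tuple R -> set (p.-tuple R) -> R).

Definition Hmat (z : 'I_n.+1 -> dataT) (i j : 'I_n.+1) : R :=
  H (z i).1 (z j).1 [set (z k).1 | k in [set: 'I_n.+1]].

Definition pH (z : 'I_n.+1 -> dataT) (i j : 'I_n.+1) : R :=
  Hmat z i j / \sum_(k < n.+1) Hmat z i k.

Definition Q_Fi (z : 'I_n.+1 -> dataT) (i : 'I_n.+1) (a : R) : \bar R :=
  quantile (pH z i) (fun j => (V (z j))%:E) a.

Definition Q_Fhat (z : 'I_n.+1 -> dataT) (a : R) : \bar R :=
  quantile (pH z ord_max)
    (fun j => if j == ord_max then +oo%E else (V (z j))%:E) a.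

Definition Sfun (z : 'I_n.+1 -> dataT) (a : R) : R :=
  (n.+1%:R)^-1 * \sum_(i < n.+1) ((V (z i))%:E <= Q_Fi z i a)%E%:R.

Variables (grid : seq R) (alpha : R).

Definition talpha1 (z : 'I_n.+1 -> dataT) : R :=
  inf [set a | a \in grid /\ alpha <= Sfun z a].
Definition talpha2 (z : 'I_n.+1 -> dataT) : R :=
  sup [set a | a \in grid /\ Sfun z a < alpha].

Definition alpha1 z := Sfun z (talpha1 z).
Definition alpha2 z := Sfun z (talpha2 z).

(* randomized choice driven by an auxiliary u in [0,1]:
   tilde alpha = tilde alpha_1 iff u <= (alpha - alpha_2)/(alpha_1 - alpha_2),
   so that for u ~ Unif[0,1] independent of the data this happens with
   probability (alpha - alpha_2)/(alpha_1 - alpha_2). *)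
Definition talpha (z : 'I_n.+1 -> dataT) (u : R) : R :=
  if u <= (alpha - alpha2 z) / (alpha1 z - alpha2 z) then talpha1 z
  else talpha2 z.

End LocalizedConformal.

Definition mutually_independent (R : realType) (d : measure_display)
  (Omega : measurableType d) (P : probability Omega R) (p n : nat)
  (Z : 'I_n.+1 -> Omega -> dataT R p) (U : Omega -> R) : Prop :=
  forall (A : 'I_n.+1 -> set (dataT R p)) (B : set R),
    (forall i, measurable (A i)) -> measurable B ->
    P ((\bigcap_i (Z i @^-1` A i)) `&` (U @^-1` B)) =
    ((\prod_(i < n.+1) P (Z i @^-1` A i)) * P (U @^-1` B))%E.

From HB Require Import structures.
From mathcomp Require Import all_boot all_order all_algebra.
From mathcomp Require Import all_classical all_reals all_analysis.
From mathcomp Require Import fingroup perm ring.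
Import Order.TTheory GRing.Theory Num.Theory.
Local Open Scope classical_set_scope.
Local Open Scope ring_scope.
Set Implicit Arguments. Unset Strict Implicit. Unset Printing Implicit Defensive.

(* Since Z_1, ..., Z_{n+1} are i.i.d. and independent of U, the law of
   (Z_{s 1}, ..., Z_{s (n+1)}, U) does not depend on the permutation s, while
   the scores S(a), and hence the randomized level, are invariant under
   permuting the data.  So the events V_i <= Q(tilde alpha; F_i) all have the
   same probability, and for i = n+1 it is the target event: V_{n+1} is below
   Q(a; F) iff the localized mass strictly below V_{n+1} is less than a, for
   F = F_{n+1} as well as for hat F.  Finally, for fixed data the U-average of
   the mean of these n+1 indicators is alpha_1 * c + alpha_2 * (1 - c) = alpha,
   where c is the probability of choosing tilde alpha_1. *)

Section real_lemmas.
Variable R : realType.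

Lemma lee_quantile m (w : 'I_m -> R) (v : 'I_m -> \bar R) (a x : R) :
  (forall j, 0 <= w j) -> a != 0 ->
  (x%:E <= quantile w v a)%E = (\sum_(j < m | (v j < x%:E)%E) w j < a).
Proof.
move=> w0 a0; rewrite /quantile (negbTE a0).
apply/idP/idP => [xle|lta].
- rewrite ltNge; apply/negP => ale.
  (* the largest atom below [x] already carries mass [a] *)
  pose t := \big[Order.max/-oo%E]_(j | (v j < x%:E)%E) v j.
  have tx : (t < x%:E)%E by apply: bigmax_lt => //; exact: ltNyr.
  have St : (a%:E <= (\sum_(j < m | (v j <= t)%E) w j)%:E)%E.
    rewrite lee_fin (eq_bigl (fun j => (v j < x%:E)%E)) // => j.
    apply/idP/idP => [vjt|vjx]; first exact: le_lt_trans vjt tx.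
    exact: le_bigmax_cond.
  have := le_lt_trans (le_trans xle (ereal_inf_lbound St)) tx.
  by rewrite ltxx.
- apply/ereal_infP => t /=; rewrite lee_fin => St.
  rewrite leNgt; apply/negP => tx.
  suff : \sum_(j < m | (v j <= t)%E) w j <= \sum_(j < m | (v j < x%:E)%E) w j.
    by move=> h; have := le_lt_trans (le_trans St h) lta; rewrite ltxx.
  rewrite [leRHS]big_mkcond [leLHS]big_mkcond /=; apply: ler_sum => j _.
  case: ifPn => vjt; last by case: ifPn.
  by rewrite (le_lt_trans vjt tx).
Qed.

Lemma finite_sup_mem (S : set R) : finite_set S -> S !=set0 -> S (sup S).
Proof.
move=> /finite_seqP[s ->] [a /= sa].
pose m := \big[Order.max/a]_(x <- s) x.
have ms : m \in s.
  rewrite /m big_seq; elim/big_rec: _ => // x y xs ys.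
  by rewrite /Order.max; case: ifP.
have ub : ubound [set` s] m by move=> y /= ys; exact: le_bigmax_seq.
suff -> : sup [set` s] = m by [].
apply/le_anti/andP; split; first by apply: ge_sup => //; exists a.
by apply: ub_le_sup => //; exists m.
Qed.

Lemma finite_inf_mem (S : set R) : finite_set S -> S !=set0 -> S (inf S).
Proof.
move=> finS [a Sa]; rewrite /inf.
have [x Sx <-] : (-%R @` S) (sup (-%R @` S)).
  by apply: finite_sup_mem; [exact: finite_image | exists (- a), a].
by rewrite opprK.
Qed.

Lemma eq_enatmul_EFin (x : \bar R) (y : R) k :
  (x *+ k.+1)%E = (y *+ k.+1)%:E -> x = y%:E.
Proof.
case: x => [r | |]; rewrite ?enatmul_pinfty ?enatmul_ninfty // -EFin_natmul.
by move=> -[] /eqP; rewrite eqrMn2r => /eqP ->.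
Qed.
End real_lemmas.

Section localizer.
Variables (R : realType) (p n : nat) (V : dataT R p -> R)
  (H : p.-tuple R -> p.-tuple R -> set (p.-tuple R) -> R).
Hypothesis H01 : forall x1 x2 X, 0 <= H x1 x2 X <= 1.
Hypothesis H1 : forall x X, H x x X = 1.
Implicit Types (z : 'I_n.+1 -> dataT R p) (i j : 'I_n.+1).

Definition mass z i := \sum_(k < n.+1) Hmat H z i k.
Definition mass_below z i := \sum_(j | V (z j) < V (z i)) Hmat H z i j.

Lemma Hmat_ge0 z i j : 0 <= Hmat H z i j.
Proof. by case/andP: (H01 (z i).1 (z j).1 [set (z k).1 | k in [set: 'I_n.+1]]). Qed.

Lemma massE z i : mass z i = 1 + \sum_(k | k != i) Hmat H z i k.
Proof. by rewrite /mass (bigD1 i) //= [Hmat _ _ _ _]H1. Qed.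

Lemma mass_gt0 z i : 0 < mass z i.
Proof.
rewrite massE; apply: (lt_le_trans ltr01); rewrite lerDl.
by apply: sumr_ge0 => k _; exact: Hmat_ge0.
Qed.

Lemma mass_below_lt z i : mass_below z i < mass z i.
Proof.
rewrite massE; apply: ltr_pwDl => //.
rewrite /mass_below [leRHS]big_mkcond [leLHS]big_mkcond /=; apply: ler_sum => j _.
case: ifPn => [ltji|_]; last by case: ifP => // _; exact: Hmat_ge0.
by case: eqP ltji => [->|//]; rewrite ltxx.
Qed.

(* The atoms [v] need only be ranked like the scores against [V_i]: this
   covers [\hat F_i] as well as [\hat F], whose last atom is [+oo]. *)
Lemma lee_quantile_pH z i (v : 'I_n.+1 -> \bar R) a :
  (forall j, (v j < (V (z i))%:E)%E = (V (z j) < V (z i))) ->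
  ((V (z i))%:E <= quantile (pH H z i) v a)%E =
  (a != 0) && (mass_below z i < a * mass z i).
Proof.
move=> hv; have [->|a0] := eqVneq a 0; first by rewrite /quantile eqxx leeNy_eq.
rewrite lee_quantile //; last by move=> j; rewrite divr_ge0 ?Hmat_ge0 ?ltW ?mass_gt0.
by rewrite /= (eq_bigl _ _ hv) /pH -big_distrl /= ltr_pdivrMr ?mass_gt0.
Qed.

Lemma lee_Q_Fi z i a :
  ((V (z i))%:E <= Q_Fi V H z i a)%E = (a != 0) && (mass_below z i < a * mass z i).
Proof. by apply: lee_quantile_pH => j; rewrite lte_fin. Qed.

Lemma lee_Q_Fhat z a :
  ((V (z ord_max))%:E <= Q_Fhat V H z a)%E =
  (a != 0) && (mass_below z ord_max < a * mass z ord_max).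
Proof.
apply: lee_quantile_pH => j; case: eqP => [->|_]; last by rewrite lte_fin.
by rewrite ltxx.
Qed.

Lemma sum_le_Q_Fi z a :
  \sum_i ((V (z i))%:E <= Q_Fi V H z i a)%E%:R = n.+1%:R * Sfun V H z a.
Proof. by rewrite /Sfun mulrA mulfV ?mul1r ?pnatr_eq0. Qed.

Lemma Sfun0 z : Sfun V H z 0 = 0.
Proof. by rewrite /Sfun big1 ?mulr0 // => i _; rewrite lee_Q_Fi eqxx. Qed.

Lemma Sfun1 z : Sfun V H z 1 = 1.
Proof.
rewrite /Sfun (eq_bigr (fun _ => 1)); first by rewrite sumr_const card_ord mulVf.
by move=> i _; rewrite lee_Q_Fi oner_eq0 mul1r mass_below_lt.
Qed.

Section permutation.
Variable s : {perm 'I_n.+1}.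

Lemma Hmat_perm z i j : Hmat H (z \o s) i j = Hmat H z (s i) (s j).
Proof.
rewrite /Hmat /=; congr H; apply/seteqP; split => _ [k _ <-]; first by exists (s k).
by exists ((s^-1)%g k) => //=; rewrite permKV.
Qed.

Lemma mass_perm z i : mass (z \o s) i = mass z (s i).
Proof.
rewrite /mass [RHS](reindex_inj (@perm_inj _ s)) /=.
by apply: eq_bigr => k _; rewrite Hmat_perm.
Qed.

Lemma mass_below_perm z i : mass_below (z \o s) i = mass_below z (s i).
Proof.
rewrite /mass_below [RHS](reindex_inj (@perm_inj _ s)) /=.
by apply: eq_bigr => k _; rewrite Hmat_perm.
Qed.

Lemma lee_Q_Fi_perm z i a :
  ((V (z (s i)))%:E <= Q_Fi V H (z \o s) i a)%E =
  ((V (z (s i)))%:E <= Q_Fi V H z (s i) a)%E.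
Proof. by rewrite [LHS]lee_Q_Fi lee_Q_Fi mass_perm mass_below_perm. Qed.

Lemma Sfun_perm z : Sfun V H (z \o s) = Sfun V H z.
Proof.
apply/funext => a; rewrite /Sfun [in RHS](reindex_inj (@perm_inj _ s)) /=.
by under eq_bigr do rewrite lee_Q_Fi_perm.
Qed.

Lemma talpha_perm grid alpha z u :
  talpha V H grid alpha (z \o s) u = talpha V H grid alpha z u.
Proof. by rewrite /talpha /alpha1 /alpha2 /talpha1 /talpha2 Sfun_perm. Qed.

End permutation.
End localizer.

Section grid.
Variables (R : realType) (p n : nat) (V : dataT R p -> R)
  (H : p.-tuple R -> p.-tuple R -> set (p.-tuple R) -> R)
  (grid : seq R) (alpha : R).
Hypothesis H01 : forall x1 x2 X, 0 <= H x1 x2 X <= 1.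
Hypothesis H1 : forall x X, H x x X = 1.
Hypothesis alpha01 : 0 < alpha < 1.
Hypotheses (grid0 : 0 \in grid) (grid1 : 1 \in grid).
Implicit Types z : 'I_n.+1 -> dataT R p.

Local Notation Sfun := (Sfun V H).
Local Notation talpha1 := (talpha1 V H grid alpha).
Local Notation talpha2 := (talpha2 V H grid alpha).
Local Notation alpha1 := (alpha1 V H grid alpha).
Local Notation alpha2 := (alpha2 V H grid alpha).

Lemma talpha1_mem_le z : talpha1 z \in grid /\ alpha <= alpha1 z.
Proof.
apply: (@finite_inf_mem _ [set a | a \in grid /\ alpha <= Sfun z a]).
  by apply: (sub_finite_set _ (finite_seq grid)) => a [].
by exists 1; split => //; rewrite /= (Sfun1 V H01 H1) ltW //; case/andP: alpha01.
Qed.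

Lemma talpha2_mem_lt z : talpha2 z \in grid /\ alpha2 z < alpha.
Proof.
apply: (@finite_sup_mem _ [set a | a \in grid /\ Sfun z a < alpha]).
  by apply: (sub_finite_set _ (finite_seq grid)) => a [].
by exists 0; split => //; rewrite /= (Sfun0 V H01 H1); case/andP: alpha01.
Qed.

Lemma talpha_in_grid z u : talpha V H grid alpha z u \in grid.
Proof.
by rewrite /talpha; case: ifP => _; [case: (talpha1_mem_le z)|case: (talpha2_mem_lt z)].
Qed.

Lemma alpha2_lt_alpha1 z : alpha2 z < alpha1 z.
Proof. exact: lt_le_trans (talpha2_mem_lt z).2 (talpha1_mem_le z).2. Qed.

Definition talpha_prob z := (alpha - alpha2 z) / (alpha1 z - alpha2 z).

Lemma talpha_prob_itv z : 0 <= talpha_prob z <= 1.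
Proof.
have a21 : 0 < alpha1 z - alpha2 z by rewrite subr_gt0 alpha2_lt_alpha1.
rewrite /talpha_prob divr_ge0 ?subr_ge0 ?(ltW (talpha2_mem_lt z).2) ?(ltW (alpha2_lt_alpha1 z)) //=.
by rewrite ler_pdivrMr // mul1r lerD2r (talpha1_mem_le z).2.
Qed.

Lemma alpha_mix z :
  alpha1 z * talpha_prob z + alpha2 z * (1 - talpha_prob z) = alpha.
Proof.
have a21 : alpha1 z - alpha2 z != 0 by rewrite subr_eq0 gt_eqF ?alpha2_lt_alpha1.
by rewrite /talpha_prob; field.
Qed.

Lemma eq_talpha z z' u :
  (forall i a, a \in grid ->
     ((V (z i))%:E <= Q_Fi V H z i a)%E = ((V (z' i))%:E <= Q_Fi V H z' i a)%E) ->
  talpha V H grid alpha z u = talpha V H grid alpha z' u.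
Proof.
move=> ez.
have eS a : a \in grid -> Sfun z a = Sfun z' a.
  by move=> ag; rewrite /Sfun; congr (_ * _); apply: eq_bigr => i _; rewrite ez.
have e1 : talpha1 z = talpha1 z'.
  by congr inf; apply/seteqP; split => a [ag ha]; split; rewrite // ?eS // -eS.
have e2 : talpha2 z = talpha2 z'.
  by congr sup; apply/seteqP; split => a [ag ha]; split; rewrite // ?eS // -eS.
have [g1 _] := talpha1_mem_le z'; have [g2 _] := talpha2_mem_lt z'.
by rewrite /talpha /alpha1 /alpha2 e1 e2 !eS.
Qed.

End grid.

Section cylinder_rectangles.
Context {d d'} (T : measurableType d) (T' : measurableType d') (n : nat).

Definition cylinder (A : 'I_n -> set T) : set (n.-tuple T) :=
  [set x | forall i, A i (tnth x i)].

Lemma measurable_cylinder A : (forall i, measurable (A i)) -> measurable (cylinder A).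
Proof.
move=> mA; rewrite (_ : cylinder A = \bigcap_(i in setT) ((@tnth n T)^~ i @^-1` A i)).
  apply: fin_bigcap_measurable; first exact: finite_finset.
  by move=> i _; rewrite -[X in measurable X]setTI; exact: measurable_tnth.
by apply/seteqP; split => x /= h i => [_|]; exact: h.
Qed.

Definition cylinder_rectangles : set (set (n.-tuple T * T')) :=
  [set cylinder A `*` B | A in [set A | forall i, measurable (A i)] & B in measurable].

Lemma cylinder_rectanglesE :
  @measurable _ (n.-tuple T * T')%type = <<s cylinder_rectangles >>.
Proof.
apply/seteqP; split; last first.
  apply: smallest_sub; first exact: sigma_algebra_measurable.
  by move=> _ [A mA [B mB <-]]; apply: measurableX => //; exact: measurable_cylinder.
apply: smallest_sub; first exact: smallest_sigma_algebra.
rewrite subUset; split; last first.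
  move=> _ [B mB <-]; apply: sub_sigma_algebra; exists (fun _ => setT) => //.
  by exists B => //; apply/seteqP; split => -[x y] /= => [[]|[]].
move=> _ [A mA <-].
have : preimage_set_system [set: n.-tuple T * T'] fst
    (measurable : set (set (n.-tuple T))) (setT `&` fst @^-1` A) by exists A.
rewrite /measurable /= /g_sigma_preimage -g_sigma_preimageE.
apply: smallest_sub; first exact: smallest_sigma_algebra.
move=> _ [B + <-].
rewrite -bigcup_seq => -[i _ [C mC <-]].
apply: sub_sigma_algebra; exists (fun j => if j == i then C else setT).
  by move=> j; case: eqP.
exists setT => //; apply/seteqP; split => -[x y] /=.
  by move=> [hx _]; do 2!split => //; have := hx i; rewrite eqxx.
by move=> [_ [_ Cx]]; split => // j; case: eqP => [->|].
Qed.

Lemma cylinder_rectangles_measure_unique (R : realType)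
    (m1 m2 : {measure set (n.-tuple T * T') -> \bar R}) :
  (m1 setT < +oo)%E ->
  (forall A B, (forall i, measurable (A i)) -> measurable B ->
     m1 (cylinder A `*` B) = m2 (cylinder A `*` B)) ->
  forall E, measurable E -> m1 E = m2 E.
Proof.
move=> m1oo m12 E mE.
apply: (measure_unique cylinder_rectangles (fun=> setT)) => //.
- exact: cylinder_rectanglesE.
- move=> _ _ [A mA [B mB <-]] [A' mA' [B' mB' <-]].
  exists (fun i => A i `&` A' i); first by move=> i; exact: measurableI.
  exists (B `&` B'); first exact: measurableI.
  rewrite -setXI; congr (_ `*` _).
  apply/seteqP; split => x /= h; first by split => i; case: (h i).
  by move=> i; split; [exact: h.1 | exact: h.2].
- by move=> _; exists (fun=> setT) => //; exists setT => //; apply/seteqP; split => -[].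
- by rewrite bigcup_const.
- by move=> _ [A mA [B mB <-]]; exact: m12.
Qed.
End cylinder_rectangles.

Section finitely_determined.
Context {d d'} (X : measurableType d) (Y : measurableType d').

Lemma measurable_fun_set (f : X -> bool) :
  measurable_fun setT f -> measurable [set x | f x].
Proof.
move=> mf; rewrite (_ : [set x | f x] = setT `&` f @^-1` [set true]); first exact: mf.
by apply/seteqP; split => x //=; case.
Qed.

(* On each cell of the finite measurable partition cut out by [b], [E] is
   the product of the cell with the section of [E] at any point of it. *)
Lemma measurable_finitely_determined (K : finType) (b : K -> X -> bool)
    (E : set (X * Y)) :
  (forall k, measurable [set x | b k x]) ->
  (forall x x' y, (forall k, b k x = b k x') -> E (x, y) -> E (x', y)) ->
  (forall x, measurable [set y | E (x, y)]) -> measurable E.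
Proof.
move=> mb Eb mE.
pose cell (c : {ffun K -> bool}) := [set x | forall k, b k x = c k].
have mcell c : measurable (cell c).
  rewrite (_ : cell c = \bigcap_(k in setT) [set x | b k x = c k]).
    apply: fin_bigcap_measurable; first exact: finite_finset.
    move=> k _; case: (c k); first exact: mb.
    rewrite (_ : [set x | b k x = false] = ~` [set x | b k x]).
      exact/measurableC/mb.
    by apply/seteqP; split => x /=; [move=> ->|move/negP/negbTE].
  by apply/seteqP; split => x /= h k => [_|]; exact: h.
pose piece c : set (X * Y) :=
  if pselect (exists x, cell c x) is left h
  then cell c `*` [set y | E (projT1 (cid h), y)] else set0.
rewrite (_ : E = \bigcup_(c in setT) piece c).
  apply: fin_bigcup_measurable; first exact: finite_finset.
  by move=> c _; rewrite /piece; case: pselect => h //; exact: measurableX.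
apply/seteqP; split => [[x y] Exy|[x y] [c _]].
  exists [ffun k => b k x] => //; rewrite /piece; case: pselect => [h|[]]; last first.
    by exists x => k; rewrite ffunE.
  split => /= [k|]; first by rewrite ffunE.
  by apply: Eb Exy => k; rewrite (projT2 (cid h)) ffunE.
rewrite /piece; case: pselect => // h [/= cx Ey].
by apply: Eb Ey => k; rewrite cx (projT2 (cid h)).
Qed.

End finitely_determined.

Section uniform_sections.
Variable R : realType.

(* [uniform_prob] is carried by the Lebesgue measurable type of [R]; [unif01]
   is the same measure on the canonical measurable type of [R], the codomain
   of real random variables. *)
Definition unif01 : set R -> \bar R := uniform_prob (@ltr01 R).

Let unif01_0 : unif01 set0 = 0%E. Proof. exact: measure0. Qed.
Let unif01_ge0 A : (0 <= unif01 A)%E. Proof. exact: measure_ge0. Qed.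
Let unif01_sigma_additive : semi_sigma_additive unif01.
Proof. exact: (@measure_semi_sigma_additive _ _ _ (uniform_prob (@ltr01 R))). Qed.
HB.instance Definition _ :=
  isMeasure.Build _ R R unif01 unif01_0 unif01_ge0 unif01_sigma_additive.
Lemma unif01_setT : unif01 setT = 1%E. Proof. exact: probability_setT. Qed.
HB.instance Definition _ := Measure_isProbability.Build _ _ _ unif01 unif01_setT.

Lemma unif01_le (c : R) : 0 <= c <= 1 -> unif01 [set u | u <= c] = c%:E.
Proof.
move=> /andP[c0 c1].
rewrite /unif01 /uniform_prob integral_uniform_pdf.
have -> : [set u : R | u <= c] `&` `[0, 1] = `[0, c]%classic.
  apply/seteqP; split => x /=; rewrite !in_itv /=.
    by move=> [xc /andP[x0 _]]; rewrite x0 xc.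
  by move=> /andP[x0 xc]; split => //; rewrite x0 (le_trans xc c1).
transitivity (\int[@lebesgue_measure R]_(x in `[0%R, c]%classic) (cst 1%:E x))%E.
  apply: eq_integral => x /set_mem /=; rewrite in_itv /= => /andP[x0 xc].
  by rewrite /uniform_pdf x0 (le_trans xc c1) subr0 invr1.
rewrite integral_cst //= mul1e lebesgue_measure_itv /= lte_fin.
case: ltP => [_|c0']; first by rewrite sube0.
by have -> : c = 0 by apply/le_anti/andP.
Qed.

Lemma unif01_ifle (c : R) (b1 b2 : bool) : 0 <= c <= 1 ->
  unif01 [set u | if u <= c then b1 else b2] = (b1%:R * c + b2%:R * (1 - c))%:E.
Proof.
move=> c01.
have mle : measurable [set u : R | u <= c].
  rewrite (_ : [set u : R | u <= c] = `]-oo, c]%classic); first exact: measurable_itv.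
  by apply/seteqP; split => x /=; rewrite in_itv.
case: b1; case: b2 => /=.
- rewrite (_ : [set u | if u <= c then true else true] = setT); last first.
    by apply/seteqP; split => x //=; case: ifP.
  by rewrite probability_setT !mul1r addrC subrK.
- rewrite (_ : [set u | if u <= c then true else false] = [set u | u <= c]); last first.
    by apply/seteqP; split => x /=; case: ifP.
  by rewrite unif01_le // mul1r mul0r addr0.
- rewrite (_ : [set u | if u <= c then false else true] = ~` [set u | u <= c]); last first.
    by apply/seteqP; split => x /=; case: ifP.
  rewrite probability_setC // mul1r mul0r add0r EFinB.
  by congr (_ - _)%E; exact: unif01_le.
- rewrite (_ : [set u | if u <= c then false else false] = set0); last first.
    by apply/seteqP; split => x //=; case: ifP.
  by rewrite measure0 !mul0r addr0.
Qed.

End uniform_sections.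

Section product_sections.
Context {d d'} (X : measurableType d) (Y : measurableType d') (R : realType).
Variables (m1 : probability X R) (m2 : {sigma_finite_measure set Y -> \bar R}).

Lemma sum_product_measure1_const_sections (I : finType) (E : I -> set (X * Y)) c :
  (forall i, measurable (E i)) ->
  (forall x, \sum_i m2 (xsection (E i) x) = c)%E ->
  (\sum_i (m1 \x m2) (E i) = c)%E.
Proof.
move=> mE hc.
transitivity (\int[m1]_x (\sum_i m2 (xsection (E i) x)))%E.
  by rewrite ge0_integral_sum // => i; exact: measurable_fun_xsection.
under eq_integral do rewrite hc.
by rewrite integral_cst // -[RHS]mule1; congr (_ * _)%E; exact: probability_setT.
Qed.

End product_sections.

Section sample.
Context {d} (Omega : measurableType d) (R : realType) (P : probability Omega R).
Variables (p n : nat) (mu : probability (dataT R p) R).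
Variables (Z : 'I_n.+1 -> Omega -> dataT R p) (U : Omega -> R).
Hypotheses (mZ : forall i, measurable_fun setT (Z i)) (mU : measurable_fun setT U).
Hypothesis Zdist : forall i A, measurable A -> P (Z i @^-1` A) = mu A.
Hypothesis Udist : forall B, measurable B -> P (U @^-1` B) = uniform_prob (@ltr01 R) B.
Hypothesis indep : mutually_independent P Z U.

Definition data (s : {perm 'I_n.+1}) w : n.+1.-tuple (dataT R p) :=
  [tuple Z (s i) w | i < n.+1].
Definition sample s w := (data s w, U w).

Lemma tnth_data1 w : tnth (data 1 w) = fun i => Z i w.
Proof. by apply/funext => i; rewrite tnth_mktuple perm1. Qed.

Lemma tnth_data s w : tnth (data s w) = tnth (data 1 w) \o s.
Proof. by rewrite tnth_data1; apply/funext => i; rewrite tnth_mktuple. Qed.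

Lemma measurable_data s : measurable_fun setT (data s).
Proof.
apply/measurable_fun_tnthP => i.
by rewrite (_ : _ \o _ = Z (s i)) //; apply/funext => w /=; rewrite tnth_mktuple.
Qed.

HB.instance Definition _ s := isMeasurableFun.Build _ _ _ _ (data s) (measurable_data s).

Lemma measurable_sample s : measurable_fun setT (sample s).
Proof. exact: measurable_fun_pair (measurable_data s) mU. Qed.

HB.instance Definition _ s := isMeasurableFun.Build _ _ _ _ (sample s) (measurable_sample s).

Lemma sample_cylinder_rectangle s A B : (forall i, measurable (A i)) -> measurable B ->
  P (sample s @^-1` (cylinder A `*` B)) = ((\prod_i mu (A i)) * unif01 B)%E.
Proof.
move=> mA mB.
have -> : sample s @^-1` (cylinder A `*` B) =
    (\bigcap_i Z i @^-1` A ((s^-1)%g i)) `&` U @^-1` B.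
  apply/seteqP; split => w /= [hA hB]; split => // i.
    by move=> _; have := hA ((s^-1)%g i); rewrite tnth_mktuple permKV.
  by rewrite tnth_mktuple; have := hA (s i) I; rewrite permK.
rewrite indep // Udist // [in RHS](reindex_inj (@perm_inj _ (s^-1)%g)) /=.
by congr (_ * _)%E; apply: eq_bigr => i _; rewrite Zdist.
Qed.

Definition sample_law := (distribution P (data 1) \x @unif01 R)%E.

Lemma sample_lawE s E : measurable E -> P (sample s @^-1` E) = sample_law E.
Proof.
move=> mE; symmetry.
apply: (cylinder_rectangles_measure_unique (m2 := distribution P (sample s))) => //.
  rewrite /= -setXTT product_measure1E // (_ : (_ * _ = 1)%E) ?ltry //.
  by rewrite -[1%E]mule1; congr (_ * _)%E; exact: probability_setT.
move=> A B mA mB; rewrite /= product_measure1E //; last exact: measurable_cylinder.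
change (P (data 1 @^-1` cylinder A) * unif01 B = P (sample s @^-1` (cylinder A `*` B)))%E.
have -> : data 1 @^-1` cylinder A = sample 1 @^-1` (cylinder A `*` setT).
  by apply/seteqP; split => w /= => [|[]].
by rewrite !sample_cylinder_rectangle // unif01_setT mule1.
Qed.

Lemma sample_perm s E : measurable E -> P (sample s @^-1` E) = P (sample 1 @^-1` E).
Proof. by move=> mE; rewrite !sample_lawE. Qed.

End sample.

Section score_event.
Variables (R : realType) (p n : nat) (V : dataT R p -> R)
  (H : p.-tuple R -> p.-tuple R -> set (p.-tuple R) -> R)
  (grid : seq R) (alpha : R).
Hypothesis mV : measurable_fun setT V.
Hypothesis H01 : forall x1 x2 X, 0 <= H x1 x2 X <= 1.
Hypothesis H1 : forall x X, H x x X = 1.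
Hypothesis mHmat : forall i j : 'I_n.+1,
  measurable_fun setT (fun x : n.+1.-tuple (dataT R p) => Hmat H (tnth x) i j).
Hypothesis alpha01 : 0 < alpha < 1.
Hypotheses (grid0 : 0 \in grid) (grid1 : 1 \in grid).
Implicit Types (x : n.+1.-tuple (dataT R p)) (i : 'I_n.+1).

Definition score_event i : set (n.+1.-tuple (dataT R p) * R) :=
  [set y | ((V (tnth y.1 i))%:E <=
            Q_Fi V H (tnth y.1) i (talpha V H grid alpha (tnth y.1) y.2))%E].

Lemma score_event_perm (s : {perm 'I_n.+1}) x x' u i :
  tnth x' = tnth x \o s -> score_event i (x', u) = score_event (s i) (x, u).
Proof. by move=> x'E; rewrite /score_event /= x'E talpha_perm // lee_Q_Fi_perm. Qed.

Lemma measurable_mass i : measurable_fun setT (fun x => mass H (tnth x) i).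
Proof. by apply: measurable_sum => k; exact: mHmat. Qed.

Lemma measurable_mass_below i :
  measurable_fun setT (fun x => mass_below V H (tnth x) i).
Proof.
rewrite /mass_below; under eq_fun do rewrite big_mkcond.
apply: measurable_sum => k; apply: measurable_fun_ifT => //.
apply: measurable_realfun.measurable_fun_ltr; apply: measurableT_comp mV (measurable_tnth _).
Qed.

Lemma score_event_section x i : [set u | score_event i (x, u)] =
  [set u | if u <= talpha_prob V H grid alpha (tnth x)
    then ((V (tnth x i))%:E <= Q_Fi V H (tnth x) i (talpha1 V H grid alpha (tnth x)))%E
    else ((V (tnth x i))%:E <= Q_Fi V H (tnth x) i (talpha2 V H grid alpha (tnth x)))%E].
Proof. by apply/seteqP; split => u; rewrite /score_event /talpha /=; case: ifP. Qed.

Lemma measurable_score_event i : measurable (score_event i).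
Proof.
pose b (k : 'I_n.+1 * 'I_(size grid)) x :=
  ((V (tnth x k.1))%:E <= Q_Fi V H (tnth x) k.1 (nth 0%R grid k.2))%E.
apply: (@measurable_finitely_determined _ _ _ _ _ b).
- move=> [j m]; apply: measurable_fun_set; rewrite /b /=.
  under eq_fun do rewrite lee_Q_Fi //.
  apply: measurable_and => //; apply: measurable_realfun.measurable_fun_ltr.
    exact: measurable_mass_below.
  by apply: measurable_realfun.measurable_funM => //; exact: measurable_mass.
- move=> x x' u bxx'; rewrite /score_event /=.
  have eb j a : a \in grid -> ((V (tnth x j))%:E <= Q_Fi V H (tnth x) j a)%E =
      ((V (tnth x' j))%:E <= Q_Fi V H (tnth x') j a)%E.
    move=> ag; have ia : (index a grid < size grid)%N by rewrite index_mem.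
    by have := bxx' (j, Ordinal ia); rewrite /b /= nth_index.
  by rewrite -(eq_talpha H01 H1 alpha01 grid0 grid1 u eb) eb // talpha_in_grid.
- move=> x; rewrite score_event_section; apply: measurable_fun_set.
  by apply: measurable_fun_ifT => //; exact: measurable_realfun.measurable_fun_ler.
Qed.

Lemma sum_xsection_score_event x :
  (\sum_i unif01 (xsection (score_event i) x) = (alpha *+ n.+1)%:E)%E.
Proof.
have c01 := talpha_prob_itv V H01 H1 alpha01 grid0 grid1 (tnth x).
under eq_bigr => i _.
  rewrite (_ : xsection _ x = [set u | score_event i (x, u)]); last first.
    by apply/seteqP; split => u; rewrite /xsection /= in_setE.
  rewrite score_event_section unif01_ifle //.
  over.
rewrite sumEFin big_split /= -!mulr_suml !sum_le_Q_Fi; congr (_%:E).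
rewrite -[in RHS](alpha_mix V H01 H1 alpha01 grid0 grid1 (tnth x)) /alpha1 /alpha2.
by rewrite -mulr_natl; ring.
Qed.

End score_event.

Section exchangeable_scores.
Context {d} (Omega : measurableType d) (R : realType) (p n : nat).
Variables (Z : 'I_n.+1 -> Omega -> dataT R p) (U : Omega -> R) (V : dataT R p -> R)
  (H : p.-tuple R -> p.-tuple R -> set (p.-tuple R) -> R) (grid : seq R) (alpha : R).
Hypothesis H01 : forall x1 x2 X, 0 <= H x1 x2 X <= 1.
Hypothesis H1 : forall x X, H x x X = 1.

Lemma preimage_sample_score_event s i :
  sample Z U s @^-1` score_event V H grid alpha i =
  sample Z U 1 @^-1` score_event V H grid alpha (s i).
Proof.
apply/seteqP; split => w;
  by rewrite /= (score_event_perm _ _ _ H01 H1 _ _ (tnth_data Z s w)).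
Qed.

End exchangeable_scores.

Unset Implicit Arguments.

Theorem corollary3 (R : realType) (p n : nat)
  (d : measure_display) (Omega : measurableType d) (P : probability Omega R)
  (mu : probability (dataT R p) R)
  (Z : 'I_n.+1 -> Omega -> dataT R p) (U : Omega -> R)
  (V : dataT R p -> R)
  (H : p.-tuple R -> p.-tuple R -> set (p.-tuple R) -> R)
  (grid : seq R) (alpha : R) :
  (forall z, 0 <= V z) -> measurable_fun setT V ->
  (forall x1 x2 X, 0 <= H x1 x2 X <= 1) ->
  (forall x X, H x x X = 1) ->
  (forall i j : 'I_n.+1,
     measurable_fun setT
       (fun z : n.+1.-tuple (dataT R p) => Hmat H (tnth z) i j)) ->
  0 < alpha < 1 ->
  0 \in grid -> 1 \in grid -> (forall a, a \in grid -> 0 <= a <= 1) ->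
  (* Z_1, ..., Z_{n+1} i.i.d. ~ mu, U ~ Unif[0,1], all independent *)
  (forall i, measurable_fun setT (Z i)) -> measurable_fun setT U ->
  (forall i A, measurable A -> P (Z i @^-1` A) = mu A) ->
  (forall B, measurable B -> P (U @^-1` B) = uniform_prob (@ltr01 R) B) ->
  mutually_independent P Z U ->
  P [set w | ((V (Z ord_max w))%:E <=
              Q_Fhat V H (fun i => Z i w)
                (talpha V H grid alpha (fun i => Z i w) (U w)))%E]
  = alpha%:E.
Proof.
move=> _ mV H01 H1 mHmat alpha01 grid0 grid1 _ mZ mU Zdist Udist indep.
pose E (i : 'I_n.+1) := score_event V H grid alpha i.
have mE := measurable_score_event mV H01 H1 mHmat alpha01 grid0 grid1.
have P_E i : P (sample Z U 1 @^-1` E i) = P (sample Z U 1 @^-1` E ord_max).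
  rewrite -[in LHS](tpermR i ord_max).
  rewrite -(preimage_sample_score_event Z U V grid alpha H01 H1 (tperm i ord_max)).
  exact: (sample_perm mZ mU Zdist Udist indep _ (mE _)).
have sum_P_E : (\sum_i P (sample Z U 1 @^-1` E i) = (alpha *+ n.+1)%:E)%E.
  under eq_bigr do rewrite (sample_lawE mZ mU Zdist Udist indep _ (mE _)).
  apply: sum_product_measure1_const_sections => // x.
  exact: (sum_xsection_score_event V H01 H1 alpha01 grid0 grid1).
have -> : [set w | ((V (Z ord_max w))%:E <=
    Q_Fhat V H (fun i => Z i w) (talpha V H grid alpha (fun i => Z i w) (U w)))%E] =
    sample Z U 1 @^-1` E ord_max.
  apply/seteqP; split => w; rewrite /E /score_event /= tnth_data1;
  by rewrite (lee_Q_Fhat V H01 H1 (Z^~ w)) (lee_Q_Fi V H01 H1 (Z^~ w)).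
apply: (@eq_enatmul_EFin _ _ _ n).
by rewrite -sum_P_E (eq_bigr _ (fun i _ => P_E i)) sumr_const card_ord.
Qed.
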